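(* Let $L$ be an oriented, ordered virtual link diagram with components $L_1,\dots,L_n$ and affine bilabeling $C$. Let $C'$ be another affine bilabeling in which some or all components have a different starting point, with the same starting bilabels. For component $i$ write $A_i=a^{(i)}_1+a^{(i)}_2$ and let $n_i$ be its weight. Track the classical crossings passed in going along $L_i$ from its starting point in $C$ to its starting point in $C'$: - let $O_i$ be the set of passages where $L_i$ is the overstrand; - let $U_i$ be the set of passages where $L_i$ is the understrand; - let $I_i$ be the total index change of $L_i$ along this path. Write $p_{(L,C)}=\sum_d\operatorname{sgn}(d)\,t_{o(d)}^{W_C(d)}-\mathrm{writhe}(L)$. Then $p_{(L,C')}$ is obtained from $p_{(L,C)}$ by: - replacing $A_i$ with $A_i-I_i$ for every $i$; and - multiplying the monomial of the crossing involved by $t_i^{\,n_i}$ for each passage in $O_i$, and by $t_j^{-n_i}$ for each passage in $U_i$, where $j$ is the other component involved in that crossing (possibly $j=i$).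
   Context: **Diagrams.** A virtual link diagram is an oriented planar diagram of ordered closed curves $L_1,\dots,L_n$ (components) with classical and virtual crossings. **Crossing conventions.** Draw a classical crossing with both strands oriented upward. - The bottom-left-to-top-right strand has index change $-1$; the bottom-right-to-top-left strand has index change $+1$. - The crossing is positive ($\operatorname{sgn}=+1$) if the overstrand is the bottom-left-to-top-right strand, and negative otherwise. - Self-crossings have both strands on one component; external crossings have strands on different components. - The weight $n_i$ of $L_i$ is the sum of the index changes of $L_i$ over its passages through external classical crossings. **Affine bilabeling.** - Each component $L_k$ gets a starting point with bilabel $(a^{(k)}_1,a^{(k)}_2)$ of formal integer variables, distinct for different components. - The bilabel is carried along the component in its orientation and is unchanged at virtual crossings. - At a classical crossing with index change $\varepsilon$, the first entry changes by $\varepsilon$ at a self-crossing, and the second entry changes by $\varepsilon$ at an external crossing. - The discrepancy $n_k$ (in the second entry) on returning is placed at the starting point. **Weights and polynomial.** Let $|(x,y)|=x+y$. With both strands drawn upward: - if $c$ is positive, $W(c)=|\text{bottom-left}|-|\text{top-left}|$; - if $c$ is negative, $W(c)=|\text{bottom-right}|-|\text{top-right}|$. The multi-variable affine index polynomial is $p_{(L,C)}=\sum_c\operatorname{sgn}(c)(t_{o(c)}^{W(c)}-1)$ over classical crossings, where $o(c)$ is the component of the overstrand. *)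

(* Virtual link diagrams are encoded by their Gauss diagrams:
   virtual crossings carry no information (bilabels are unchanged there), so a
   diagram is determined by, for each component, the cyclic sequence of its
   passages through classical crossings (read from the starting point), and by
   the sign of each classical crossing. *)
From mathcomp Require Import all_boot all_algebra.
Set Implicit Arguments. Unset Strict Implicit. Unset Printing Implicit Defensive.
Import GRing.Theory Num.Theory.
Local Open Scope ring_scope.

Section VirtualLinks.
Variables (n m : nat).

(* A passage through classical crossing c : 'I_m; the boolean is true for the
   passage along the overstrand, false for the passage along the understrand. *)
Definition passage := ('I_m * bool)%type.

(* An oriented ordered virtual link diagram with components L_0..L_{n-1} and
   classical crossings 0..m-1, together with a choice of starting point on each
   component: comp_seq i lists, in orientation order starting from the starting
   point of L_i, the passages of L_i through classical crossings.
   csign c = true iff crossing c is positive. *)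
Record vdiagram := VDiagram {
  comp_seq : 'I_n -> seq passage;
  csign : 'I_m -> bool }.

Definition well_formed (L : vdiagram) : bool :=
  perm_eq (flatten [seq comp_seq L i | i <- enum 'I_n]) (enum {: 'I_m * bool}).

Definition sgn (L : vdiagram) (c : 'I_m) : int := if csign L c then 1 else -1.

(* With both strands drawn upward: the bottom-left-to-top-right strand is the
   overstrand iff the crossing is positive. *)
Definition bltr (L : vdiagram) (c : 'I_m) : passage := (c, csign L c).
Definition brtl (L : vdiagram) (c : 'I_m) : passage := (c, ~~ csign L c).

Definition index_change (L : vdiagram) (p : passage) : int :=
  if p == bltr L p.1 then -1 else 1.

Definition self_crossing (L : vdiagram) (c : 'I_m) : bool :=
  [exists i, ((c, true) \in comp_seq L i) && ((c, false) \in comp_seq L i)].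

Definition weight (L : vdiagram) (i : 'I_n) : int :=
  \sum_(p <- comp_seq L i | ~~ self_crossing L p.1) index_change L p.

(* Affine bilabeling with starting bilabels (a1 i, a2 i): the bilabel of L_i
   just before its j-th passage (j = 0 is the starting point). *)
Definition bilabel (L : vdiagram) (a1 a2 : 'I_n -> int) (i : 'I_n) (j : nat)
  : int * int :=
  (a1 i + \sum_(q <- take j (comp_seq L i) | self_crossing L q.1) index_change L q,
   a2 i + \sum_(q <- take j (comp_seq L i) | ~~ self_crossing L q.1) index_change L q).

Definition bnorm (x : int * int) : int := x.1 + x.2.

(* |incoming bilabel| and |outgoing bilabel| of a passage
   (the sum has exactly one nonzero summand for a well-formed diagram) *)
Definition in_norm (L : vdiagram) (a1 a2 : 'I_n -> int) (p : passage) : int :=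
  \sum_(i < n | p \in comp_seq L i) bnorm (bilabel L a1 a2 i (index p (comp_seq L i))).
Definition out_norm (L : vdiagram) (a1 a2 : 'I_n -> int) (p : passage) : int :=
  \sum_(i < n | p \in comp_seq L i) bnorm (bilabel L a1 a2 i (index p (comp_seq L i)).+1).

(* W(c): positive: |bottom-left| - |top-left|; negative: |bottom-right| - |top-right|.
   bottom-left = incoming of the BL->TR strand, top-left = outgoing of BR->TL,
   bottom-right = incoming of BR->TL, top-right = outgoing of BL->TR. *)
Definition Wc (L : vdiagram) (a1 a2 : 'I_n -> int) (c : 'I_m) : int :=
  if csign L c then in_norm L a1 a2 (bltr L c) - out_norm L a1 a2 (brtl L c)
  else in_norm L a1 a2 (brtl L c) - out_norm L a1 a2 (bltr L c).

Definition writhe (L : vdiagram) : int := \sum_(c < m) sgn L c.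

(* The multi-variable affine index polynomial, evaluated at t (t_i invertible):
   sum over crossings c, grouped by the overstrand component i = o(c). *)
Definition aff_index_poly (R : unitRingType) (L : vdiagram) (a1 a2 : 'I_n -> int)
  (t : 'I_n -> R) : R :=
  \sum_(i < n) \sum_(c < m | (c, true) \in comp_seq L i)
     (sgn L c)%:~R * (t i ^ (Wc L a1 a2 c) - 1).

(* Moving the starting point of L_i forward past its first k i passages. *)
Definition move_start (L : vdiagram) (k : 'I_n -> nat) : vdiagram :=
  VDiagram (fun i => rot (k i) (comp_seq L i)) (csign L).

Definition path (L : vdiagram) (k : 'I_n -> nat) (i : 'I_n) : seq passage :=
  take (k i) (comp_seq L i).
Definition Opass L k i : seq passage := [seq p <- path L k i | p.2].
Definition Upass L k i : seq passage := [seq p <- path L k i | ~~ p.2].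
Definition Itot L k i : int := \sum_(p <- path L k i) index_change L p.

(* The right-hand side: in p_(L,C) = sum_d sgn(d) t_{o(d)}^{W_C(d)} - writhe,
   replace A_i by A_i - I_i (A_i = a1 i + a2 i; realised by a1 i := a1 i - I_i),
   multiply the monomial of crossing d by t_j^{n_j} if its over-passage lies in O_j,
   and by t_{o(d)}^{-n_j} if its under-passage lies in U_j. *)
Definition moved_poly (R : unitRingType) (L : vdiagram) (a1 a2 : 'I_n -> int)
  (k : 'I_n -> nat) (t : 'I_n -> R) : R :=
  \sum_(i < n) \sum_(c < m | (c, true) \in comp_seq L i)
     (sgn L c)%:~R *
       (t i ^ (Wc L (fun j => a1 j - Itot L k j) a2 c)
        * (\prod_(j < n | (c, true) \in Opass L k j) t j ^ weight L j)
        * (\prod_(j < n | (c, false) \in Upass L k j) t i ^ (- weight L j)))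
  - (writhe L)%:~R.

End VirtualLinks.

From Pilot Require Import Defs.
From mathcomp Require Import all_boot all_algebra ring zify.
Local Open Scope ring_scope.
Import GRing.Theory.

(* The
   |bilabel| before a passage is A_i plus the index change accumulated so far;
   after the rotation it loses the index change I_i of the skipped arc and, if
   the passage itself was skipped, gains the total index change of L_i, which
   is the weight n_i because the two passages through a self-crossing have
   opposite index changes.  For either sign, W(c) is |incoming label of the
   over-passage| - |outgoing label of the under-passage|, so the exponent of
   t_{o(c)} changes by the I's, absorbed into A_i - I_i, and by n_i resp.
   -n_j exactly when the over- resp. under-passage of c lies on a skipped arc. *)

Lemma uniq_flatten_map (I T : eqType) (s : I -> seq T) r i :
  uniq (flatten [seq s j | j <- r]) -> i \in r -> uniq (s i).
Proof.
elim: r => [|a r IHr] //=; rewrite cat_uniq inE => /and3P[ua _ ur].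
by case/orP=> [/eqP-> | /IHr]; [exact: ua | exact].
Qed.

Lemma flatten_map_uniq_inj (I T : eqType) (s : I -> seq T) r i j x :
  uniq (flatten [seq s l | l <- r]) -> i \in r -> j \in r ->
  x \in s i -> x \in s j -> i = j.
Proof.
have mem_flat l : l \in r -> x \in s l -> x \in flatten [seq s l | l <- r].
  by move=> lr xl; apply/flatten_mapP; exists l.
elim: r mem_flat => [|a r IHr] //= mem_flat; rewrite cat_uniq => /and3P[_ ar ur].
have notin_r l : l \in r -> x \in s a -> x \in s l -> False.
  move=> lr xa xl; apply: (negP ar); apply/hasP; exists x => //.
  by apply/flatten_mapP; exists l.
rewrite !inE => /orP[/eqP-> | ir] /orP[/eqP-> | jr] xi xj //.
- by case: (notin_r j).
- by case: (notin_r i).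
- by apply: IHr => // l lr xl; apply/flatten_mapP; exists l.
Qed.

Lemma take_index_cat (T : eqType) (s1 s2 : seq T) p d :
  p \in s1 -> (d <= 1)%N ->
  take (index p s1 + d) (s1 ++ s2) = take (index p s1 + d) s1.
Proof.
rewrite -index_mem => p_s1 d_le1; apply: takel_cat.
by apply: leq_trans (leq_add (leqnn _) d_le1) _; rewrite addn1.
Qed.

Lemma sum_take_index_rot (T : eqType) (V : zmodType) (f : T -> V) s k p d :
  uniq s -> p \in s -> (d <= 1)%N ->
  \sum_(q <- take (index p (rot k s) + d) (rot k s)) f q =
    \sum_(q <- take (index p s + d) s) f q - \sum_(q <- take k s) f q
    + (if p \in take k s then \sum_(q <- s) f q else 0).
Proof.
rewrite /rot; set x := take k s; set y := drop k s.
have -> : s = x ++ y by rewrite cat_take_drop.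
move=> uniq_xy p_xy d_le1.
have sum_take_right (u v : seq T) : p \in v -> p \notin u ->
    \sum_(q <- take (index p (u ++ v) + d) (u ++ v)) f q =
    \sum_(q <- u) f q + \sum_(q <- take (index p v + d) v) f q.
  move=> p_v p_u; rewrite index_cat (negbTE p_u) -addnA take_cat ltnNge leq_addr.
  by rewrite /= addKn big_cat.
have [p_x | p_x] := boolP (p \in x).
- have p_y : p \notin y.
    move: uniq_xy; rewrite cat_uniq => /and3P[_ /hasPn x_notin_y _].
    by apply: contraTN p_x => /x_notin_y.
  rewrite (sum_take_right y x) // index_cat p_x take_index_cat // big_cat /=.
  by rewrite addrA subrK addrC.
- have p_y : p \in y by rewrite mem_cat (negbTE p_x) in p_xy.
  rewrite (sum_take_right x y) // index_cat p_y take_index_cat //.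
  by rewrite addr0 addrC addKr.
Qed.

Section Diagrams.
Variables n m : nat.
Implicit Types (L : vdiagram n m) (c : 'I_m).

Lemma bnorm_bilabel L a1 a2 i j :
  bnorm (bilabel L a1 a2 i j) =
    a1 i + a2 i + \sum_(q <- take j (comp_seq L i)) index_change L q.
Proof.
rewrite /bnorm /bilabel /= [in RHS](bigID (fun q => self_crossing L q.1)) /=.
by rewrite addrACA.
Qed.

Lemma WcE L a1 a2 c :
  Wc L a1 a2 c = in_norm L a1 a2 (c, true) - out_norm L a1 a2 (c, false).
Proof. by rewrite /Wc /bltr /brtl; case: (csign L c). Qed.

Definition other_passage (p : passage m) : passage m := (p.1, ~~ p.2).

Lemma index_change_other L p :
  index_change L (other_passage p) = - index_change L p.
Proof.
case: p => c b; rewrite /index_change /bltr /other_passage /=.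
by case: b; case: (csign L c); rewrite ?xpair_eqE ?eqxx.
Qed.

Section WellFormed.
Variable L : vdiagram n m.
Hypothesis wfL : well_formed L.

Let uniq_flat : uniq (flatten [seq comp_seq L i | i <- enum 'I_n]).
Proof. by rewrite (perm_uniq wfL) enum_uniq. Qed.

Lemma comp_seq_uniq i : uniq (comp_seq L i).
Proof. by apply: uniq_flatten_map uniq_flat _; rewrite mem_enum. Qed.

Lemma comp_seq_inj p i j : p \in comp_seq L i -> p \in comp_seq L j -> i = j.
Proof. by apply: flatten_map_uniq_inj uniq_flat _ _; rewrite mem_enum. Qed.

Lemma comp_seq_cover p : exists i, p \in comp_seq L i.
Proof.
have : p \in flatten [seq comp_seq L i | i <- enum 'I_n].
  by rewrite (perm_mem wfL) mem_enum.
by case/flatten_mapP=> i _ p_i; exists i.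
Qed.

Lemma big_comp_seq {R : Type} {idx : R} (op : Monoid.law idx) (P : pred 'I_n)
    (F : 'I_n -> R) {p : passage m} {i : 'I_n} :
  p \in comp_seq L i -> (forall j, P j -> p \in comp_seq L j) ->
  \big[op/idx]_(j < n | P j) F j = if P i then F i else idx.
Proof.
move=> p_i P_sub; have P_eq j : P j -> j = i by move/P_sub/comp_seq_inj; apply.
case: ifP => Pi.
  by apply: big_pred1 => j /=; apply/idP/eqP=> [/P_eq | ->].
by apply: big_pred0 => j; apply: contraFF Pi => /[dup] /P_eq->.
Qed.

Lemma sum_self_index_change i :
  \sum_(q <- comp_seq L i | self_crossing L q.1) index_change L q = 0.
Proof.
rewrite -big_filter; set sq := filter _ _.
have other_sq q : q \in sq -> other_passage q \in sq.
  case: q => c b; rewrite !mem_filter /= => /andP[self_c q_i]; rewrite self_c.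
  have /existsP[i' /andP[ct_i' cf_i']] := self_c.
  have <- : i' = i by case: b q_i; apply: comp_seq_inj.
  by case: b q_i.
have other_inj : injective other_passage.
  by move=> [c b] [c' b'] [-> /negb_inj->].
have other_invol q : other_passage (other_passage q) = q.
  by case: q => c b; rewrite /other_passage negbK.
have sq_perm : perm_eq sq (map other_passage sq).
  apply: uniq_perm; rewrite ?map_inj_uniq ?filter_uniq ?comp_seq_uniq // => q.
  rewrite -{2}[q]other_invol mem_map //.
  by apply/idP/idP => /other_sq; rewrite ?other_invol.
have : \sum_(q <- sq) index_change L q = - \sum_(q <- sq) index_change L q.
  rewrite {1}(perm_big _ sq_perm) big_map -sumrN.
  by apply: eq_bigr => q _; rewrite index_change_other.
set S := \sum_(q <- sq) _; lia.
Qed.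

Lemma weightE i : weight L i = \sum_(q <- comp_seq L i) index_change L q.
Proof.
by rewrite [RHS](bigID (fun q => self_crossing L q.1)) /= sum_self_index_change add0r.
Qed.

Lemma writhe_by_overstrand :
  writhe L = \sum_(i < n) \sum_(c < m | (c, true) \in comp_seq L i) sgn L c.
Proof.
rewrite /writhe (exchange_big_dep xpredT) //=; apply: eq_bigr => c _.
have [i ct_i] := comp_seq_cover (c, true).
by rewrite (big_comp_seq _ _ (fun=> sgn L c) ct_i) ?ct_i.
Qed.

Variable k : 'I_n -> nat.

Definition skipped_weight i (p : passage m) : int :=
  if p \in Defs.path L k i then weight L i else 0.

Lemma bnorm_bilabel_move_start a1 a2 i p d :
  p \in comp_seq L i -> (d <= 1)%N ->
  bnorm (bilabel (move_start L k) a1 a2 i (index p (rot (k i) (comp_seq L i)) + d)) =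
    bnorm (bilabel L (fun j => a1 j - Itot L k j) a2 i (index p (comp_seq L i) + d))
    + skipped_weight i p.
Proof.
move=> p_i d_le1; rewrite !bnorm_bilabel /= sum_take_index_rot ?comp_seq_uniq //.
change (index_change (move_start L k)) with (index_change L).
rewrite /skipped_weight -weightE -/(Defs.path L k i) -/(Itot L k i); ring.
Qed.

Lemma in_norm_move_start a1 a2 i p : p \in comp_seq L i ->
  in_norm (move_start L k) a1 a2 p =
    in_norm L (fun j => a1 j - Itot L k j) a2 p + skipped_weight i p.
Proof.
move=> p_i; rewrite /in_norm (eq_bigl (fun j => p \in comp_seq L j)) => [|j].
  rewrite !(big_comp_seq _ _ _ p_i) // p_i.
  by have := bnorm_bilabel_move_start a1 a2 _ _ 0 p_i isT; rewrite !addn0.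
by rewrite /= mem_rot.
Qed.

Lemma out_norm_move_start a1 a2 i p : p \in comp_seq L i ->
  out_norm (move_start L k) a1 a2 p =
    out_norm L (fun j => a1 j - Itot L k j) a2 p + skipped_weight i p.
Proof.
move=> p_i; rewrite /out_norm (eq_bigl (fun j => p \in comp_seq L j)) => [|j].
  rewrite !(big_comp_seq _ _ _ p_i) // p_i.
  by have := bnorm_bilabel_move_start a1 a2 _ _ 1 p_i isT; rewrite !addn1.
by rewrite /= mem_rot.
Qed.

Lemma monomial_move_start (R : fieldType) (t : 'I_n -> R) a1 a2 c i :
  (forall j, t j != 0) -> (c, true) \in comp_seq L i ->
  t i ^ Wc (move_start L k) a1 a2 c =
    t i ^ Wc L (fun j => a1 j - Itot L k j) a2 c
    * (\prod_(j < n | (c, true) \in Opass L k j) t j ^ weight L j)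
    * (\prod_(j < n | (c, false) \in Upass L k j) t i ^ (- weight L j)).
Proof.
move=> t_neq0 ct_i; have [j cf_j] := comp_seq_cover (c, false).
have sub_comp_seq (a : pred (passage m)) q l :
    q \in filter a (Defs.path L k l) -> q \in comp_seq L l.
  by rewrite mem_filter => /andP[_ /mem_take].
rewrite /Opass /Upass (big_comp_seq _ _ _ ct_i (sub_comp_seq _ _)).
rewrite (big_comp_seq _ _ _ cf_j (sub_comp_seq _ _)) !mem_filter /=.
rewrite !WcE (in_norm_move_start _ _ _ _ ct_i) (out_norm_move_start _ _ _ _ cf_j).
rewrite /skipped_weight opprD addrACA !expfzDr //.
by rewrite mulrA; case: ifP; case: ifP; rewrite ?oppr0 ?expr0z ?mulr1.
Qed.

End WellFormed.
End Diagrams.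

Theorem proposition8 (n m : nat) (L : vdiagram n m) (k : 'I_n -> nat)
  (R : fieldType) (t : 'I_n -> R) (a1 a2 : 'I_n -> int) :
  well_formed L ->
  (forall i, k i <= size (comp_seq L i))%N ->
  (forall i, t i != 0) ->
  aff_index_poly (move_start L k) a1 a2 t = moved_poly L a1 a2 k t.
Proof.
move=> wfL _ t_neq0.
rewrite /aff_index_poly /moved_poly writhe_by_overstrand // rmorph_sum -sumrB.
apply: eq_bigr => i _; rewrite rmorph_sum -sumrB.
rewrite (eq_bigl (fun c => (c, true) \in comp_seq L i)) => [|c]; last first.
  by rewrite /= mem_rot.
apply: eq_bigr => c ct_i.
by rewrite monomial_move_start // mulrBr mulr1.
Qed.
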